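(* For all $q\ge 4$ and all integers $n\ge 1$, $\kappa^{\min}_{n,q}\ge \lfloor n/2-\log_q(n)\rfloor$.
   Context: Let $q\ge 2$, $A=\{0,1,\dots,q-1\}$, $[n]=\{1,\dots,n\}$, and let $F(n,q)$ be the set of all maps $A^n\to A^n$. For $f\in F(m,q)$ and $i\in[m]$, $f_i$ is the $i$-th coordinate function and $f^i(x)=(x_1,\dots,x_{i-1},f_i(x),x_{i+1},\dots,x_m)$; for a word $w=(w_1,\dots,w_t)$ over $[m]$, $f^w=f^{w_t}\circ\cdots\circ f^{w_1}$. $\Pi([m])$ is the set of permutations of $[m]$ written as words $(w_1,\dots,w_m)$. $\mathrm{pr}_{[n]}:A^m\to A^n$ is the projection onto the first $n$ coordinates. For $m\ge n$, $(f,w)$ with $f\in F(m,q)$, $w\in\Pi([m])$ sequentializes $h\in F(n,q)$ if $\mathrm{pr}_{[n]}\circ f^w=h\circ\mathrm{pr}_{[n]}$. $\kappa^{\min}(h)$ is the smallest $k\ge 0$ such that there exist $f\in F(n+k,q)$ and $w\in\Pi([n+k])$ with $(f,w)$ sequentializing $h$, and $\kappa^{\min}_{n,q}=\max\{\kappa^{\min}(h): h\in F(n,q)\}$. *)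

From mathcomp Require Import all_boot.
From Stdlib Require Import Reals ZArith.
Set Implicit Arguments. Unset Strict Implicit. Unset Printing Implicit Defensive.

(* Alphabet A = {0,..,q-1} = 'I_q; coordinates [n] = {1,..,n} are indexed
   0-based by 'I_n.  A state in A^n is a finite function 'I_n -> 'I_q. *)
Definition state (n q : nat) := {ffun 'I_n -> 'I_q}.

Definition upd (m q : nat) (f : state m q -> state m q) (i : 'I_m)
  (x : state m q) : state m q :=
  [ffun j => if j == i then f x i else x j].

(* f^w = f^{w_t} o ... o f^{w_1}: apply w_1 first. *)
Definition upd_word (m q : nat) (f : state m q -> state m q) (w : seq 'I_m)
  (x : state m q) : state m q :=
  foldl (fun y i => upd f i y) x w.

Definition is_perm_word (m : nat) (w : seq 'I_m) : bool :=
  uniq w && (size w == m).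

Definition proj (n k q : nat) (x : state (n + k) q) : state n q :=
  [ffun j : 'I_n => x (lshift k j)].

Definition sequentializes (n k q : nat) (f : state (n + k) q -> state (n + k) q)
  (w : seq 'I_(n + k)) (h : state n q -> state n q) : Prop :=
  is_perm_word w /\ forall x, proj (upd_word f w x) = h (proj x).

Definition seqable (n q k : nat) (h : state n q -> state n q) : Prop :=
  exists f w, @sequentializes n k q f w h.

Definition kbound (n q : nat) : Z :=
  Int_part (INR n / 2 - ln (INR n) / ln (INR q))%R.

(* Let a = n/2.  For every a-subset V of the coordinates choose a cylinder
   (the inputs with fixed values outside V) and carve out of it a core D V of
   at least q^a/2 inputs, the cores being pairwise disjoint; averaging over the
   translates of the cylinder makes this possible as long as
   2 * 'C(n, a) <= q^(n - a), which holds for q >= 4.  On D V the map h sets the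
   coordinates in V to constants and copies the free V-coordinates of its input
   to coordinates outside V, so h is injective on D V.  Now cut the word of any
   sequentialization of h right after it has updated exactly a original
   coordinates, forming a set V.  For an input in D V, the original coordinates
   outside V still hold their fixed input values and those in V already hold
   their constant final values, so the output is determined by the k extra
   coordinates: q^a/2 <= #|D V| <= q^k, and as q > 2 this forces k >= n/2. *)

From Stdlib Require Import Reals Lra ZArith.
From Corelib Require Import ssreflect.

Set Implicit Arguments. Unset Strict Implicit. Unset Printing Implicit Defensive.

(* These two lemmas precede the mathcomp import: ssrnat's notations hide those of R_scope. *)
Lemma ln_ge0 (x : R) : (1 <= x)%R -> (0 <= ln x)%R.
Proof.
move=> /Rle_lt_or_eq_dec [x_gt1 | <-]; last by rewrite ln_1; apply: Rle_refl.
by rewrite -ln_1; apply/Rlt_le/ln_increasing; lra.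
Qed.

Lemma kbound_double_le (n q : nat) : (1 <= n)%nat -> (2 <= q)%nat ->
  (2 * kbound n q <= Z.of_nat n)%Z.
Proof.
move=> n_pos q_ge2.
have log_ge0 : (0 <= ln (INR n) / ln (INR q))%R.
  apply: Rmult_le_pos; first by apply/ln_ge0/(le_INR 1).
  apply/Rlt_le/Rinv_0_lt_compat; rewrite -ln_1.
  by apply: ln_increasing; [lra | apply: (lt_INR 1)].
have [int_le _] := base_Int_part (INR n / 2 - ln (INR n) / ln (INR q)).
by apply: le_IZR; rewrite mult_IZR -INR_IZR_INZ /kbound; lra.
Qed.

From mathcomp Require Import all_boot zify.

Lemma exists_le_average (T : finType) (F : T -> nat) (t0 : T) :
  exists t, #|T| * F t <= \sum_t F t.
Proof.
have [t _ Fmin] := @arg_minnP T t0 xpredT F isT; exists t.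
by rewrite -sum_nat_const; apply: leq_sum => s _; apply: Fmin.
Qed.

Lemma card_bigcup_seq_le (I : eqType) (T : finType) (r : seq I) (F : I -> {set T}) m :
  {in r, forall i, #|F i| <= m} -> #|\bigcup_(i <- r) F i| <= size r * m.
Proof.
elim: r => [|i r IHr] Fm; first by rewrite big_nil cards0.
rewrite big_cons mulSn; apply: leq_trans (leq_card_setU _ _) _.
by rewrite leq_add ?Fm ?mem_head // IHr // => j rj; rewrite Fm // in_cons rj orbT.
Qed.

Lemma bin_le_exp_pred m j : 0 < m -> 'C(m, j) <= 2 ^ m.-1.
Proof.
case: m => // m _ /=; elim: m j => [|m IHm] [|j] //.
- by case: j => [|j]; rewrite ?bin1 ?bin_small.
- by rewrite bin0 expn_gt0.
- by rewrite binS expnS mul2n -addnn leq_add.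
Qed.

Section Cylinders.
Variables n q : nat.
Local Notation F := (state n q).

Definition cyl (V : {set 'I_n}) (u : F) : {set F} :=
  [set y | y \in family (fun i => if i \in V then predT else pred1 (u i))].

Lemma cylP (V : {set 'I_n}) (u y : F) :
  reflect (forall i, i \notin V -> y i = u i) (y \in cyl V u).
Proof.
rewrite inE; apply: (iffP familyP) => [yu i iNV | yu i].
  by have := yu i; rewrite (negbTE iNV) => /eqP.
by case: ifP => [//|/negbT /yu /= ->]; rewrite inE.
Qed.

Lemma cyl_sym (V : {set 'I_n}) (u y : F) : (y \in cyl V u) = (u \in cyl V y).
Proof. by apply/cylP/cylP => yu i /yu ->. Qed.

Lemma card_cyl (V : {set 'I_n}) (u : F) : #|cyl V u| = q ^ #|V|.
Proof.
rewrite cardsE card_family foldrE big_map big_enum /=.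
rewrite (eq_bigr (fun i => if i \in V then q else 1)); last first.
  by move=> i _; case: ifP; rewrite ?card_ord ?card1.
by rewrite -big_mkcond prod_nat_const.
Qed.

Lemma sum_card_cylI (V : {set 'I_n}) (B : {set F}) :
  \sum_u #|cyl V u :&: B| = q ^ #|V| * #|B|.
Proof.
under eq_bigr do rewrite -sum1_card big_mkcond /=.
rewrite exchange_big /= [RHS]mulnC -sum_nat_const [RHS]big_mkcond /=.
apply: eq_bigr => y _; case: (boolP (y \in B)) => yB; last first.
  by rewrite big1 // => u _; rewrite inE (negbTE yB) andbF.
rewrite -(card_cyl V y) -sum1_card [RHS]big_mkcond /=; apply: eq_bigr => u _.
by rewrite inE yB andbT cyl_sym.
Qed.

Lemma exists_cyl_small_meet (V : {set 'I_n}) (B : {set F}) (u0 : F) :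
  exists u, q ^ n * #|cyl V u :&: B| <= q ^ #|V| * #|B|.
Proof.
have [u avg] := exists_le_average (fun u => #|cyl V u :&: B|) u0.
have cardF : #|F| = q ^ n by rewrite card_ffun !card_ord.
by exists u; rewrite -sum_card_cylI -cardF.
Qed.

Lemma exists_disjoint_cores (a : nat) (L : seq {set 'I_n}) (u0 : F) :
  uniq L -> {in L, forall V : {set 'I_n}, #|V| = a} -> 2 * size L <= q ^ (n - a) ->
  exists (u : {set 'I_n} -> F) (D : {set 'I_n} -> {set F}),
    [/\ {in L, forall V, D V \subset cyl V (u V)},
        {in L &, forall V W, V != W -> [disjoint D V & D W]} &
        {in L, forall V, q ^ a <= 2 * #|D V|}].
Proof.
elim: L => [|V L IHL] /=; first by move=> *; exists (fun=> u0), (fun=> set0); split.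
case/andP=> VnL uL aVL sizeVL.
have aL : {in L, forall W : {set 'I_n}, #|W| = a}.
  by move=> W WL; apply: aVL; rewrite in_cons WL orbT.
have aV : #|V| = a by apply: aVL; rewrite mem_head.
have [u [D [Dcyl Ddisj Dbig]]] := IHL uL aL (leq_trans (leq_mul (leqnn 2) (leqnSn _)) sizeVL).
pose B := \bigcup_(W <- L) D W.
have DB W : W \in L -> D W \subset B by move=> WL; rewrite /B bigcup_seq; apply: bigcup_sup.
have cardB : #|B| <= size L * q ^ a.
  apply: card_bigcup_seq_le => W WL.
  by rewrite -(aL W WL) -(card_cyl W (u W)) subset_leq_card ?Dcyl.
have [uV meet] := exists_cyl_small_meet V B u0.
have neqV W : W \in L -> (W == V) = false.
  by move=> WL; apply/eqP => WV; rewrite -WV WL in VnL.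
exists (fun W => if W == V then uV else u W).
exists (fun W => if W == V then cyl V uV :\: B else D W).
split.
- move=> W; rewrite in_cons => /orP [/eqP -> | WL]; first by rewrite eqxx subsetDl.
  by rewrite neqV //; apply: Dcyl.
- have coreB W : W \in L -> [disjoint cyl V uV :\: B & D W].
    move=> WL; rewrite disjoint_sym; apply: disjointWl (DB W WL) _.
    by rewrite disjoint_sym disjoints_subset setDE subsetIr.
  move=> W W'; rewrite !in_cons => /orP [/eqP -> | WL] /orP [/eqP -> | W'L];
    rewrite ?eqxx ?neqV //.
  + by move=> _; apply: coreB.
  + by move=> _; rewrite disjoint_sym; apply: coreB.
  + exact: Ddisj.
- move=> W; rewrite in_cons => /orP [/eqP -> | WL]; last by rewrite neqV //; apply: Dbig.
  rewrite eqxx cardsD card_cyl aV.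
  have an : a <= n by rewrite -aV; apply: leq_trans (max_card _) _; rewrite card_ord.
  have qn : q ^ n = q ^ (n - a) * q ^ a by rewrite -expnD subnK.
  rewrite qn aV in meet.
  have P0 : 0 < q ^ (n - a) by apply: leq_trans sizeVL.
  move: meet cardB sizeVL P0; set x := #|_ :&: _|.
  move: (q ^ (n - a)) (q ^ a) => P Q meet cardB sizeVL P0.
  have : P * (Q * (2 * x)) <= P * (Q * Q) by nia.
  rewrite leq_pmul2l //; case: (posnP Q) => [-> // | Q0]; rewrite leq_pmul2l //; lia.
Qed.
End Cylinders.

Lemma discrete_ivt (g : nat -> nat) N a :
  g 0 = 0 -> (forall j, g j.+1 <= (g j).+1) -> a <= g N -> exists j, g j = a.
Proof.
move=> g0 gS; elim: N => [|N IHN]; first by rewrite g0 leqn0 => /eqP ->; exists 0.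
case: (leqP a (g N)) => [/IHN // | gNa] agN; exists N.+1.
by apply/eqP; rewrite eqn_leq agN andbT; apply: leq_trans (gS N) gNa.
Qed.

Lemma perm_word_mem m (w : seq 'I_m) i : is_perm_word w -> i \in w.
Proof.
case/andP => /card_uniqP cw /eqP sw.
have /subset_cardP wT : #|w| = #|'I_m| by rewrite cw sw card_ord.
by rewrite (wT (subset_predT _)).
Qed.

Lemma card_preim_seq_le (T T' : finType) (e : T -> T') (s : seq T') :
  injective e -> #|[set i | e i \in s]| <= size s.
Proof.
move=> einj; rewrite -(card_imset _ einj); apply: leq_trans (card_size s).
by apply: subset_leq_card; apply/subsetP => _ /imsetP [i + ->]; rewrite inE.
Qed.

Section Snapshot.
Variables n k q : nat.
Local Notation G := (state (n + k) q).
Variable f : G -> G.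

Lemma upd_word_cat (s1 s2 : seq 'I_(n + k)) x :
  upd_word f (s1 ++ s2) x = upd_word f s2 (upd_word f s1 x).
Proof. by rewrite /upd_word foldl_cat. Qed.

Lemma upd_word_notin (s : seq 'I_(n + k)) x i : i \notin s -> upd_word f s x i = x i.
Proof.
elim: s x => [//|j s IHs] x; rewrite in_cons negb_or => /andP [ij iNs].
by rewrite /upd_word /= -/(upd_word f s _) IHs // ffunE (negbTE ij).
Qed.

Definition prefix_set (w : seq 'I_(n + k)) (j : nat) : {set 'I_n} :=
  [set i | lshift k i \in take j w].

Lemma exists_prefix_set_card (w : seq 'I_(n + k)) a :
  is_perm_word w -> a <= n -> exists j, #|prefix_set w j| = a.
Proof.
move=> pw an; apply: (@discrete_ivt (fun j => #|prefix_set w j|) (size w)).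
- by apply: eq_card0 => i; rewrite inE take0.
- move=> j; rewrite {1}/prefix_set -[j.+1]addn1 takeD.
  rewrite (_ : [set i | _] = prefix_set w j :|: [set i | lshift k i \in take 1 (drop j w)]);
    last by apply/setP => i; rewrite !inE mem_cat.
  apply: leq_trans (leq_card_setU _ _) _; rewrite -[X in _ <= X]addn1 leq_add2l.
  apply: leq_trans (card_preim_seq_le _ (@lshift_inj n k)) _.
  by rewrite size_take; case: ifP => // /negbT; rewrite -leqNgt.
- rewrite /prefix_set take_size (_ : [set i | _] = setT) ?cardsT ?card_ord //.
  by apply/setP => i; rewrite !inE perm_word_mem.
Qed.

Lemma card_le_extra_states (h : state n q -> state n q) (w : seq 'I_(n + k)) j
    (D : {set state n q}) (u c : state n q) (d : 'I_q) :
  sequentializes f w h ->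
  D \subset cyl (prefix_set w j) u ->
  {in D, forall y i, i \in prefix_set w j -> h y i = c i} ->
  {in D &, injective h} -> #|D| <= q ^ k.
Proof.
move=> [/andP [uw _] fwh] Dcyl Dc hinj.
pose ext (y : state n q) : G :=
  [ffun p => if split p is inl i then y i else d].
have proj_ext y : proj (ext y) = y by apply/ffunP => i; rewrite !ffunE (unsplitK (inl i)).
pose mid y := upd_word f (take j w) (ext y).
have h_mid y : h y = proj (upd_word f (drop j w) (mid y)).
  by rewrite -{1}(proj_ext y) -fwh /mid -upd_word_cat cat_take_drop.
have take_drop p : p \in take j w -> p \notin drop j w.
  move: uw; rewrite -{1}(cat_take_drop j w) cat_uniq => /and3P [_ /hasPn Hd _] pt.
  by apply/negP => /Hd; rewrite pt.
have mid_orig y i : y \in D -> mid y (lshift k i) = if i \in prefix_set w j then c i else u i.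
  move=> yD; rewrite inE; case: ifP => iV.
    by rewrite -(Dc y yD i) ?inE // h_mid ffunE upd_word_notin ?take_drop.
  rewrite /mid upd_word_notin ?iV // ffunE (unsplitK (inl i)).
  by move/subsetP: Dcyl => /(_ y yD) /cylP ->; rewrite ?inE ?iV.
pose extra y : {ffun 'I_k -> 'I_q} := [ffun e => mid y (rshift n e)].
have extra_inj : {in D &, injective extra}.
  move=> y y' yD y'D /ffunP Eyy'; apply: hinj => //; rewrite !h_mid.
  congr (proj (upd_word _ _ _)); apply/ffunP => p; rewrite -(splitK p).
  case: (split p) => [i | e]; first by rewrite /= !mid_orig.
  by have := Eyy' e; rewrite !ffunE.
by have := @leq_card_in _ _ extra (mem D) extra_inj; rewrite card_ffun !card_ord.
Qed.
End Snapshot.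

Section Routing.
Variables n q : nat.
Local Notation F := (state n q).

Definition route_index (V : {set 'I_n}) (i : 'I_n) : 'I_n :=
  nth i (enum V) (index i (enum (~: V))).

Lemma route_index_onto (V : {set 'I_n}) b : #|V| <= #|~: V| -> b \in V ->
  exists2 i, i \in ~: V & route_index V i = b.
Proof.
move=> VC bV; have bVs : index b (enum V) < size (enum V) by rewrite index_mem mem_enum.
have bCs : index b (enum V) < size (enum (~: V)) by apply: leq_trans bVs _; rewrite -!cardE.
exists (nth b (enum (~: V)) (index b (enum V))); first by rewrite -mem_enum mem_nth.
by rewrite /route_index index_uniq ?enum_uniq // (set_nth_default b) // nth_index ?mem_enum.
Qed.

Definition route (V : {set 'I_n}) (c y : F) : F :=
  [ffun i => if i \in V then c i else y (route_index V i)].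

Lemma route_inj (V : {set 'I_n}) (c u : F) :
  #|V| <= #|~: V| -> {in cyl V u &, injective (route V c)}.
Proof.
move=> VC y y' /cylP yu /cylP y'u /ffunP Eyy'; apply/ffunP => i.
case: (boolP (i \in V)) => iV; last by rewrite yu // y'u.
have [j jC <-] := route_index_onto VC iV.
by have := Eyy' j; rewrite !ffunE; move: jC; rewrite inE => /negbTE ->.
Qed.
End Routing.

Lemma exists_hard_map (n q a : nat) :
  0 < q -> a <= n - a -> 2 * 'C(n, a) <= q ^ (n - a) ->
  exists h : state n q -> state n q, forall k, seqable k h -> q ^ a <= 2 * q ^ k.
Proof.
move=> q_pos a_half binq.
pose u0 : state n q := [ffun _ => Ordinal q_pos].
pose L := enum [set V : {set 'I_n} | #|V| == a].
have memL V : (V \in L) = (#|V| == a) by rewrite mem_enum inE.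
have aL : {in L, forall V : {set 'I_n}, #|V| = a} by move=> V; rewrite memL => /eqP.
have sizeL : 2 * size L <= q ^ (n - a) by rewrite -cardE card_draws card_ord.
have [u [D [Dcyl Ddisj Dbig]]] := exists_disjoint_cores u0 (enum_uniq _) aL sizeL.
pose h y := if [pick V in L | y \in D V] is Some V then route V (u V) y else y.
have hD V : V \in L -> {in D V, h =1 route V (u V)}.
  move=> VL y yD; rewrite /h; case: pickP => [W /andP [WL yDW] | none]; last first.
    by have := none V; rewrite VL yD.
  case: (eqVneq W V) => [-> // | WV].
  by have /disjointFr := Ddisj W V WL VL WV => /(_ y yDW); rewrite yD.
exists h => k [f [w [pw fwh]]].
have [j Vcard] := exists_prefix_set_card pw (leq_trans a_half (leq_subr a n)).
set V := prefix_set w j in Vcard.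
have VL : V \in L by rewrite memL Vcard.
have VC : #|V| <= #|~: V| by have := cardsC V; rewrite card_ord Vcard; lia.
apply: leq_trans (Dbig V VL) _; rewrite leq_mul2l; apply/orP; right.
apply: (card_le_extra_states (Ordinal q_pos) (conj pw fwh) (Dcyl V VL)).
- by move=> y yD i iV; rewrite (hD V VL y yD) ffunE iV.
- move=> y y' yD y'D; rewrite (hD V VL y yD) (hD V VL y' y'D).
  exact: (route_inj VC (subsetP (Dcyl V VL) _ yD) (subsetP (Dcyl V VL) _ y'D)).
Qed.

Lemma exists_map_needing_half_extra (n q : nat) : 3 < q -> 0 < n ->
  exists h : state n q -> state n q, forall k, seqable k h -> n./2 <= k.
Proof.
move=> q_gt3 n_pos; have q_pos : 0 < q by apply: leq_trans q_gt3.
have n_halves := odd_double_half n.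
have half_le : n./2 <= n - n./2 by lia.
have binq : 2 * 'C(n, n./2) <= q ^ (n - n./2).
  apply: (@leq_trans (2 ^ n)).
    have -> : 2 ^ n = 2 * 2 ^ n.-1 by rewrite -expnS prednK.
    by rewrite leq_mul2l bin_le_exp_pred.
  apply: (@leq_trans (4 ^ (n - n./2))); last by rewrite leq_exp2r; [exact: q_gt3 | lia].
  by rewrite (_ : 4 = 2 ^ 2) // -expnM leq_exp2l //; lia.
have [h hard] := exists_hard_map q_pos half_le binq.
exists h => k /hard qa; rewrite leqNgt; apply/negP => ka.
have : q * q ^ k <= 2 * q ^ k by rewrite -expnS (leq_trans _ qa) // leq_pexp2l.
by rewrite leq_pmul2r ?expn_gt0 ?q_pos // leqNgt (ltn_trans _ q_gt3).
Qed.

Theorem mainTheorem6 (q n : nat) (hq : 4 <= q) (hn : 1 <= n) :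
  exists h : state n q -> state n q,
    forall k : nat, seqable k h -> (kbound n q <= Z.of_nat k)%Z.
Proof.
have [h hard] := exists_map_needing_half_extra hq hn.
exists h => k /hard half_k.
have := kbound_double_le (leP hn) (leP (leq_trans (isT : 2 <= 4) hq)).
have := odd_double_half n.
lia.
Qed.
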